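(* Let $u\in\Lambda$ with $c(u)=1$. Then for every $t\in\Lambda\cap C_{TM}$ there exists a positive integer $k_0$ such that for all integers $k\ge k_0$, $$c(t+ku)=1+\min\{f_i(t)-g_j(t):\ (i,j)\text{ such that } u\in C(i,j)\};$$ in particular $c(t+ku)$ is independent of $k$ for $k\ge k_0$.
   Context: Coordinates: $t=(\ell_1,\ell_2,m_1,m_2,n_1,n_2)$. $V_\ell$ is the irreducible $SU(3)$-representation with Dynkin label $\ell=(\ell_1,\ell_2)\in\mathbb{Z}_{\ge0}^2$; $c(t)=\dim(V_\ell\otimes V_m\otimes V_n)^{SU(3)}$ if all coordinates of $t$ are nonnegative, $0$ otherwise. $\Lambda=\{t\in\mathbb{Z}^6:\ell_1+m_1+n_1\equiv\ell_2+m_2+n_2\pmod 3\}$. $\omega(t)=\tfrac13(\ell_1+m_1+n_1-\ell_2-m_2-n_2)$; $f_1=0$, $f_2=\ell_1-m_2-\omega$, $f_3=\ell_2-n_1+\omega$, $g_1=-m_2$, $g_2=-n_1$, $g_3=\ell_1-m_2-n_2-\omega$, $g_4=-m_2-\omega$, $g_5=-n_1+\omega$, $g_6=\ell_2-m_1-n_1+\omega$ (indices $i\in\{1,2,3\}$, $j\in\{1,\dots,6\}$). $C_{TM}=\{t\in\mathbb{R}^6: g_j(t)\le f_i(t)\ \forall i,j\}$ and $C(i,j)=\{t\in C_{TM}: f_i(t)=\min_p f_p(t),\ g_j(t)=\max_q g_q(t)\}$. *)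

From HB Require Import structures.
From mathcomp Require Import all_boot all_order all_algebra.
Set Implicit Arguments. Unset Strict Implicit. Unset Printing Implicit Defensive.
Import Order.TTheory GRing.Theory Num.Theory.
Local Open Scope ring_scope.

Record pt6 := Pt6 { l1 : int; l2 : int; m1 : int; m2 : int; n1 : int; n2 : int }.

Definition addpt (t u : pt6) : pt6 :=
  Pt6 (l1 t + l1 u) (l2 t + l2 u) (m1 t + m1 u) (m2 t + m2 u)
      (n1 t + n1 u) (n2 t + n2 u).

Definition scalept (k : nat) (u : pt6) : pt6 :=
  Pt6 (l1 u *+ k) (l2 u *+ k) (m1 u *+ k) (m2 u *+ k) (n1 u *+ k) (n2 u *+ k).

Definition inLambda (t : pt6) : Prop :=
  (3 %| (l1 t + m1 t + n1 t - (l2 t + m2 t + n2 t)))%Z.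

(* Weights of V_(a,b) (Dynkin label (a,b)), listed with multiplicity, via the
   Gelfand-Tsetlin basis: top row (a+b, b, 0), middle row (x, y) with
   a+b >= x >= b >= y >= 0, bottom row z with x >= z >= y.  The GL_3 weight
   (z, x+y-z, a+2b-x-y) is written in fundamental-weight coordinates of sl_3:
   (2z-x-y, 2x+2y-z-a-2b). *)
Definition su3_weights (a b : nat) : seq (int * int) :=
  flatten [seq flatten [seq [seq ((2 * z)%:Z - x%:Z - y%:Z,
                                   (2 * x + 2 * y)%:Z - z%:Z - a%:Z - (2 * b)%:Z)
                             | z <- iota y (x - y).+1]
                        | y <- iota 0 b.+1]
          | x <- iota b a.+1].

(* Weyl alternation: the multiplicity of the trivial representation in a
   finite-dimensional representation with weight multiplicities mult is
   sum_{w in W} sgn(w) mult(rho - w rho).  In fundamental-weight coordinates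
   the six vectors rho - w rho are (0,0),(3,0),(0,3) (sign +1) and
   (2,-1),(-1,2),(2,2) (sign -1). *)
Definition weyl_sign (v : int * int) : int :=
  if (v == (0, 0)) || (v == (3, 0)) || (v == (0, 3)) then 1
  else if (v == (2, -1)) || (v == (-1, 2)) || (v == (2, 2)) then -1
  else 0.

Definition addw (p q : int * int) : int * int := (p.1 + q.1, p.2 + q.2).

(* dim (V_(a1,a2) (x) V_(b1,b2) (x) V_(c1,c2))^{SU(3)} *)
Definition inv_dim (a1 a2 b1 b2 c1 c2 : nat) : int :=
  \sum_(p <- su3_weights a1 a2) \sum_(q <- su3_weights b1 b2)
    \sum_(r <- su3_weights c1 c2) weyl_sign (addw (addw p q) r).

Definition nonneg6 (t : pt6) : bool :=
  [&& 0 <= l1 t, 0 <= l2 t, 0 <= m1 t, 0 <= m2 t, 0 <= n1 t & 0 <= n2 t].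

Definition c (t : pt6) : int :=
  if nonneg6 t then
    inv_dim `|l1 t|%N `|l2 t|%N `|m1 t|%N `|m2 t|%N `|n1 t|%N `|n2 t|%N
  else 0.

Definition omega (t : pt6) : rat :=
  ((l1 t + m1 t + n1 t - l2 t - m2 t - n2 t)%:~R) / 3%:R.

Definition fQ (i : 'I_3) (t : pt6) : rat :=
  match val i with
  | 0%N => 0
  | 1%N => (l1 t)%:~R - (m2 t)%:~R - omega t
  | _ => (l2 t)%:~R - (n1 t)%:~R + omega t
  end.

Definition gQ (j : 'I_6) (t : pt6) : rat :=
  match val j with
  | 0%N => - (m2 t)%:~R
  | 1%N => - (n1 t)%:~R
  | 2%N => (l1 t)%:~R - (m2 t)%:~R - (n2 t)%:~R - omega t
  | 3%N => - (m2 t)%:~R - omega t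
  | 4%N => - (n1 t)%:~R + omega t
  | _ => (l2 t)%:~R - (m1 t)%:~R - (n1 t)%:~R + omega t
  end.

(* C_TM (intersected with the integer points, which is all we need). *)
Definition inCTM (t : pt6) : Prop := forall (i : 'I_3) (j : 'I_6), gQ j t <= fQ i t.

Definition inCij (i : 'I_3) (j : 'I_6) (t : pt6) : Prop :=
  [/\ inCTM t, (forall p : 'I_3, fQ i t <= fQ p t) & (forall q : 'I_6, gQ q t <= gQ j t)].

From HB Require Import structures.
From mathcomp Require Import all_boot all_order all_algebra.
From mathcomp Require Import zify ring.
Import Order.TTheory GRing.Theory Num.Theory.
Local Open Scope ring_scope.

(* Counting Gelfand-Tsetlin patterns gives the weight multiplicities of V_(a,b)
   in closed form.  By the Weyl character formula, the alternating sum over the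
   weights of V_n defining c collapses, and using the Weyl invariance of the
   weights of V_l it becomes a Racah-Speiser sum of six weight multiplicities of
   V_l.  On C_TM this sum equals 1 + min_i f_i - max_j g_j; off C_TM one of the
   three such sums (with l, m or n singled out) vanishes term by term.  Hence
   c(u) = 1 puts u in C_TM with min_i f_i(u) = max_j g_j(u).  As f_i and g_j are
   linear, for large k the indices optimal at t + k u are optimal at u, and the
   k-dependence of 1 + f_i - g_j cancels. *)

(** * Weight multiplicities of V_(a,b) *)

(* The multiplicity of the weight (a, b) - i (2, -1) - j (-1, 2), i.e.
   lambda - i alpha_1 - j alpha_2, in V_(a,b). *)
Definition multij (a b i j : int) : int :=
  Order.max 0 (1 + Order.min (Order.min a i) (Order.min j (a + j - i)) - Order.max 0 (j - b)).

Lemma sum_iota_indicator (lo hi : int) m k :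
  \sum_(n <- iota m k) ((lo <= n%:Z) && (n%:Z <= hi))%:Z =
  Order.max 0 (Order.min hi (m%:Z + k%:Z - 1) - Order.max lo m%:Z + 1).
Proof.
elim: k m => [|k IHk] m; first by rewrite big_nil; lia.
by rewrite /= big_cons IHk; lia.
Qed.

(* The patterns (x, y, z) of a given weight: z, then y, then x range over intervals. *)
Lemma sum_indicator_weights_multij (a b : nat) (i j : int) :
  \sum_(r <- su3_weights a b) (r == (a%:Z - 2 * i + j, b%:Z + i - 2 * j))%:Z =
  multij a b i j.
Proof.
set Z0 : int := a%:Z + b%:Z - i; set S0 : int := a%:Z + 2 * b%:Z - j.
rewrite /su3_weights big_flatten big_map big_seq.
under eq_bigr => x hx.
  rewrite big_flatten big_map big_seq.
  under eq_bigr => y hy.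
    rewrite big_map big_seq.
    under eq_bigr => z _.
      have -> : (((2 * z)%:Z - x%:Z - y%:Z, (2 * x + 2 * y)%:Z - z%:Z - a%:Z - (2 * b)%:Z) ==
                 (a%:Z - 2 * i + j, b%:Z + i - 2 * j))%:Z
              = ((Z0 <= z%:Z) && (z%:Z <= Z0 - 1 + (x%:Z + y%:Z == S0)%:Z))%:Z.
        by rewrite xpair_eqE /Z0 /S0; lia.
    over.
    rewrite -big_seq sum_iota_indicator.
    have -> : Order.max 0 (Order.min (Z0 - 1 + (x%:Z + y%:Z == S0)%:Z) (y%:Z + (x - y).+1%:Z - 1)
                - Order.max Z0 y%:Z + 1)
         = ((S0 - x%:Z <= y%:Z) &&
            (y%:Z <= S0 - x%:Z - 1 + ((S0 - x%:Z <= Z0) && (Z0 <= x%:Z))%:Z))%:Z.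
      by move: hx hy; rewrite !mem_iota; lia.
  over.
  rewrite -big_seq sum_iota_indicator.
  have -> : Order.max 0 (Order.min (S0 - x%:Z - 1 + ((S0 - x%:Z <= Z0) && (Z0 <= x%:Z))%:Z)
              (0%:Z + b.+1%:Z - 1) - Order.max (S0 - x%:Z) 0%:Z + 1)
     = ((Order.max (S0 - Z0) (Order.max Z0 (S0 - b%:Z)) <= x%:Z) && (x%:Z <= S0))%:Z.
    by lia.
over.
by rewrite -big_seq sum_iota_indicator /multij /Z0 /S0; lia.
Qed.

Definition mult (a b : int) (v : int * int) : int :=
  if (3 %| 2 * (a - v.1) + (b - v.2))%Z
  then multij a b ((2 * (a - v.1) + (b - v.2)) %/ 3)%Z (((a - v.1) + 2 * (b - v.2)) %/ 3)%Z
  else 0.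

Lemma mult_latticeE {a b : int} {v} {i j : int} :
  v = (a - 2 * i + j, b + i - 2 * j) -> mult a b v = multij a b i j.
Proof. by move->; rewrite /mult /= ifT; [congr multij|]; lia. Qed.

Definition psub (s y : int * int) : int * int := (s.1 - y.1, s.2 - y.2).

Lemma mult_psub_latticeE {a b : int} s {y : int * int} (i j : int) :
  s.1 - y.1 = a - 2 * i + j -> s.2 - y.2 = b + i - 2 * j -> mult a b (psub s y) = multij a b i j.
Proof. by move=> e1 e2; apply: mult_latticeE; rewrite /psub e1 e2. Qed.

Lemma mult_off_lattice (a b : int) v :
  ~~ (3 %| 2 * (a - v.1) + (b - v.2))%Z -> mult a b v = 0.
Proof. by move=> nd; rewrite /mult (negbTE nd). Qed.

Variant mult_spec (a b : int) (v : int * int) : int -> Prop :=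
  | MultLattice i j of v = (a - 2 * i + j, b + i - 2 * j) : mult_spec a b v (multij a b i j)
  | MultOffLattice of ~~ (3 %| 2 * (a - v.1) + (b - v.2))%Z : mult_spec a b v 0.

Lemma multP (a b : int) v : mult_spec a b v (mult a b v).
Proof.
have [/dvdzP[k hk]|nd] := boolP (3 %| 2 * (a - v.1) + (b - v.2))%Z; last first.
  by rewrite mult_off_lattice //; constructor.
have ev : v = (a - 2 * k + (2 * k - (a - v.1)), b + k - 2 * (2 * k - (a - v.1))).
  by case: v hk => v1 v2 /= hk; congr pair; lia.
by rewrite (mult_latticeE ev); constructor.
Qed.

Lemma sum_indicator_weights (a b : nat) v :
  \sum_(r <- su3_weights a b) (r == v)%:Z = mult a b v.
Proof.
case: multP => [i j ->|nd]; first exact: sum_indicator_weights_multij.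
rewrite /su3_weights big_flatten big_map big1 // => x _.
rewrite big_flatten big_map big1 // => y _.
rewrite big_map big1 // => z _.
by case: v nd => v1 v2 /= nd; rewrite xpair_eqE; lia.
Qed.

Lemma count_mem_weights (a b : nat) v : (count_mem v (su3_weights a b))%:Z = mult a b v.
Proof.
rewrite -sum_indicator_weights.
elim: (su3_weights a b) => [|r s IHs]; first by rewrite big_nil.
by rewrite big_cons /= PoszD IHs eq_sym.
Qed.

Definition refl1 (v : int * int) : int * int := (- v.1, v.1 + v.2).
Definition refl2 (v : int * int) : int * int := (v.1 + v.2, - v.2).

Lemma refl1K : involutive refl1.
Proof. by case=> x y; rewrite /refl1 /=; congr pair; ring. Qed.

Lemma refl2K : involutive refl2.
Proof. by case=> x y; rewrite /refl2 /=; congr pair; ring. Qed.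

Lemma mult_refl1 (a b : int) v : 0 <= a -> 0 <= b -> mult a b (refl1 v) = mult a b v.
Proof.
move=> a_ge0 b_ge0; case: (multP a b v) => [i j ->|nd].
  by rewrite (@mult_latticeE _ _ _ (a - i + j) j) /refl1 /=; [rewrite /multij|congr pair]; lia.
by rewrite mult_off_lattice //; move: nd; rewrite /refl1 /=; lia.
Qed.

Lemma mult_refl2 (a b : int) v : 0 <= a -> 0 <= b -> mult a b (refl2 v) = mult a b v.
Proof.
move=> a_ge0 b_ge0; case: (multP a b v) => [i j ->|nd].
  by rewrite (@mult_latticeE _ _ _ i (b + i - j)) /refl2 /=; [rewrite /multij|congr pair]; lia.
by rewrite mult_off_lattice //; move: nd; rewrite /refl2 /=; lia.
Qed.

Lemma perm_weights_invariant (f : int * int -> int * int) (a b : nat) :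
  involutive f -> (forall v, mult a b (f v) = mult a b v) ->
  perm_eq (su3_weights a b) (map f (su3_weights a b)).
Proof.
move=> fK multf; apply/allP => v _; apply/eqP.
rewrite count_map [RHS](eq_count (a2 := pred1 (f v))); last first.
  by move=> r /=; apply/eqP/eqP => [<-|->]; rewrite fK.
by apply/eqP; rewrite -eqz_nat !count_mem_weights multf.
Qed.

Lemma sum_weights_refl1 (a b : nat) (F : int * int -> int) :
  \sum_(p <- su3_weights a b) F p = \sum_(p <- su3_weights a b) F (refl1 p).
Proof.
rewrite (perm_big _ (@perm_weights_invariant refl1 a b refl1K _)) ?big_map // => v.
exact: mult_refl1.
Qed.

Lemma sum_weights_refl2 (a b : nat) (F : int * int -> int) :
  \sum_(p <- su3_weights a b) F p = \sum_(p <- su3_weights a b) F (refl2 p).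
Proof.
rewrite (perm_big _ (@perm_weights_invariant refl2 a b refl2K _)) ?big_map // => v.
exact: mult_refl2.
Qed.

(** * The Weyl character formula *)

Definition ind (lo hi x : int) : int := ((lo <= x) && (x <= hi))%:Z.

Definition rect (a b i j : int) : int :=
  ind 0 a i * ind 0 b j - ind (a + 1) (a + b + 1) i * ind (b + 1) (a + b + 1) j.

Lemma multij_sub_diag (a b i j : int) : 0 <= a -> 0 <= b ->
  multij a b i j - multij a b (i - 1) (j - 1) = rect a b i j.
Proof.
move=> a_ge0 b_ge0.
have -> : rect a b i j = ((0 <= i <= a) && (0 <= j <= b))%:Z
                        - ((a + 1 <= i <= a + b + 1) && (b + 1 <= j <= a + b + 1))%:Z.
  by rewrite /rect /ind -!PoszM !mulnb.
by rewrite /multij; lia.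
Qed.

Lemma ind_sub1 (lo hi x : int) : lo <= hi + 1 ->
  ind lo hi x - ind lo hi (x - 1) = (x == lo)%:Z - (x == hi + 1)%:Z.
Proof. by rewrite /ind; lia. Qed.

Lemma multij_alternating (a b i j : int) : 0 <= a -> 0 <= b ->
  multij a b i j - multij a b (i - 1) j - multij a b i (j - 1)
  + multij a b (i - 1) (j - 2) + multij a b (i - 2) (j - 1) - multij a b (i - 2) (j - 2) =
  (i == 0)%:Z * (j == 0)%:Z - (i == a + 1)%:Z * (j == 0)%:Z - (i == 0)%:Z * (j == b + 1)%:Z
  + (i == a + b + 2)%:Z * (j == b + 1)%:Z + (i == a + 1)%:Z * (j == a + b + 2)%:Z
  - (i == a + b + 2)%:Z * (j == a + b + 2)%:Z.
Proof.
move=> a_ge0 b_ge0.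
transitivity (rect a b i j - rect a b (i - 1) j - rect a b i (j - 1) + rect a b (i - 1) (j - 1)).
  have e1 : i - 1 - 1 = i - 2 by ring.
  have e2 : j - 1 - 1 = j - 2 by ring.
  by rewrite -!multij_sub_diag // e1 e2; lia.
transitivity ((ind 0 a i - ind 0 a (i - 1)) * (ind 0 b j - ind 0 b (j - 1))
   - (ind (a + 1) (a + b + 1) i - ind (a + 1) (a + b + 1) (i - 1))
     * (ind (b + 1) (a + b + 1) j - ind (b + 1) (a + b + 1) (j - 1))).
  by rewrite /rect; ring.
by rewrite !ind_sub1; lia.
Qed.

(* Alternation of the multiplicities over the six vectors rho - w rho, with w
   running through e, s1, s2, s1 s2, s2 s1, w0. *)
Definition alt_mult (a b : int) (y : int * int) : int :=
  mult a b (psub (0, 0) y) - mult a b (psub (2, -1) y) - mult a b (psub (-1, 2) y)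
  + mult a b (psub (0, 3) y) + mult a b (psub (3, 0) y) - mult a b (psub (2, 2) y).

(* Signed indicator of the orbit of (a, b) + rho under the Weyl group, shifted
   back by rho and negated. *)
Definition alt_delta (a b : int) (y : int * int) : int :=
  (y == (- a, - b))%:Z - (y == (a + 2, - a - b - 1))%:Z - (y == (- a - b - 1, b + 2))%:Z
  + (y == (a + b + 3, - a))%:Z + (y == (- b, a + b + 3))%:Z - (y == (b + 2, a + 2))%:Z.

Lemma eq_off_lattice {a b : int} {y p : int * int} :
  ~~ (3 %| 2 * (a + y.1) + (b + y.2))%Z -> (3 %| 2 * (a + p.1) + (b + p.2))%Z -> (y == p) = false.
Proof. by move=> nd dp; apply: contraNF nd => /eqP ->. Qed.

(* The Weyl character formula: the character of V_(a,b) times the Weyl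
   denominator is the alternating sum over the orbit of (a, b) + rho. *)
Lemma alt_mult_delta (a b : int) y : 0 <= a -> 0 <= b -> alt_mult a b y = alt_delta a b y.
Proof.
move=> a_ge0 b_ge0; rewrite /alt_mult /alt_delta.
have [/dvdzP[i hi]|nd] := boolP (3 %| 2 * (a + y.1) + (b + y.2))%Z; last first.
  rewrite !mult_off_lattice /psub /=; try lia.
  by rewrite !(eq_off_lattice nd) //=; lia.
case: y hi => y1 y2 /= hi; set j := 2 * i - a - y1.
rewrite (mult_psub_latticeE (0, 0) i j) ?(mult_psub_latticeE (2, -1) (i - 1) j)
  ?(mult_psub_latticeE (-1, 2) i (j - 1)) ?(mult_psub_latticeE (0, 3) (i - 1) (j - 2))
  ?(mult_psub_latticeE (3, 0) (i - 2) (j - 1)) ?(mult_psub_latticeE (2, 2) (i - 2) (j - 2));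
  try by rewrite /j /=; lia.
rewrite multij_alternating //; congr (_ - _ - _ + _ + _ - _);
  by rewrite -PoszM mulnb xpair_eqE /j; lia.
Qed.

(** * The Racah-Speiser formula for c *)

Lemma weyl_signE v : weyl_sign v =
  (v == (0, 0))%:Z - (v == (2, -1))%:Z - (v == (-1, 2))%:Z
  + (v == (0, 3))%:Z + (v == (3, 0))%:Z - (v == (2, 2))%:Z.
Proof.
case: v => x y; rewrite /weyl_sign !xpair_eqE.
case: ifP => [/orP[/orP[]|] /andP[/eqP-> /eqP->] // | /negbT].
case: ifP => [/orP[/orP[]|] /andP[/eqP-> /eqP->] // | /negbT].
by rewrite !negb_or => /andP[/andP[/negbTE-> /negbTE->] /negbTE->]
  /andP[/andP[/negbTE-> /negbTE->] /negbTE->].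
Qed.

Lemma addw_eq_psub (y r s : int * int) : (addw y r == s) = (r == psub s y).
Proof. by case: y r s => [y1 y2] [r1 r2] [s1 s2]; rewrite /addw /psub /= !xpair_eqE; lia. Qed.

Lemma psub_eq_psub (s p d : int * int) : (psub s p == d) = (p == psub s d).
Proof. by case: s p d => [s1 s2] [p1 p2] [d1 d2]; rewrite /psub /= !xpair_eqE; lia. Qed.

Lemma big_alt6 (I : Type) (r : seq I) (f1 f2 f3 f4 f5 f6 : I -> int) :
  \sum_(i <- r) (f1 i - f2 i - f3 i + f4 i + f5 i - f6 i) =
  \sum_(i <- r) f1 i - \sum_(i <- r) f2 i - \sum_(i <- r) f3 i
  + \sum_(i <- r) f4 i + \sum_(i <- r) f5 i - \sum_(i <- r) f6 i.
Proof. by rewrite !big_split /= !sumrN. Qed.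

Lemma congr_alt6 (x1 x2 x3 x4 x5 x6 y1 y2 y3 y4 y5 y6 : int) :
  x1 = y1 -> x2 = y2 -> x3 = y3 -> x4 = y4 -> x5 = y5 -> x6 = y6 ->
  x1 - x2 - x3 + x4 + x5 - x6 = y1 - y2 - y3 + y4 + y5 - y6.
Proof. by move=> -> -> -> -> -> ->. Qed.

Lemma sum_weyl_sign_weights (a b : nat) y :
  \sum_(r <- su3_weights a b) weyl_sign (addw y r) = alt_mult a b y.
Proof.
under eq_bigr => r _ do rewrite weyl_signE !addw_eq_psub.
by rewrite big_alt6 !sum_indicator_weights.
Qed.

Lemma sum_alt_delta_weights (a b : int) (m1 m2 : nat) p :
  \sum_(q <- su3_weights m1 m2) alt_delta a b (addw p q) =
    mult m1 m2 (psub (- a, - b) p) - mult m1 m2 (psub (a + 2, - a - b - 1) p)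
  - mult m1 m2 (psub (- a - b - 1, b + 2) p) + mult m1 m2 (psub (a + b + 3, - a) p)
  + mult m1 m2 (psub (- b, a + b + 3) p) - mult m1 m2 (psub (b + 2, a + 2) p).
Proof.
under eq_bigr => q _ do rewrite /alt_delta !addw_eq_psub.
by rewrite big_alt6 !sum_indicator_weights.
Qed.

(* V_(a,b)^* = V_(b,a). *)
Lemma mult_dual (a b : int) v : 0 <= a -> 0 <= b -> mult a b v = mult b a (- v.1, - v.2).
Proof.
move=> a_ge0 b_ge0; case: (multP a b v) => [i j ->|nd].
  by rewrite (@mult_latticeE _ _ _ (a + b - i) (a + b - j)) /=; [rewrite /multij|congr pair]; lia.
by rewrite mult_off_lattice //; move: nd => /=; lia.
Qed.

(* Reindex the sum over the weights of V_l by the Weyl group element of each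
   term, then pass to the dual V_m^* = V_(m2,m1). *)
Lemma sum_alt_delta_dual (l1 l2 m1 m2 : nat) (n1 n2 : int) :
  \sum_(p <- su3_weights l1 l2) \sum_(q <- su3_weights m1 m2) alt_delta n1 n2 (addw p q) =
  \sum_(p <- su3_weights l1 l2) alt_mult m2 m1 (psub (- n1, - n2) p).
Proof.
under eq_bigr => p _ do rewrite sum_alt_delta_weights.
rewrite /alt_mult !big_alt6; apply: congr_alt6.
- apply: eq_bigr => p _; rewrite mult_dual //; congr mult.
  by rewrite /psub /=; congr pair; ring.
- rewrite (sum_weights_refl1 l1 l2); apply: eq_bigr => p _.
  rewrite mult_dual // -[RHS]mult_refl1 //; congr mult.
  by rewrite /psub /refl1 /=; congr pair; ring.
- rewrite (sum_weights_refl2 l1 l2); apply: eq_bigr => p _.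
  rewrite mult_dual // -[RHS]mult_refl2 //; congr mult.
  by rewrite /psub /refl2 /=; congr pair; ring.
- rewrite (sum_weights_refl1 l1 l2) (sum_weights_refl2 l1 l2); apply: eq_bigr => p _.
  rewrite mult_dual // -[RHS]mult_refl2 // -[RHS]mult_refl1 //; congr mult.
  by rewrite /psub /refl1 /refl2 /=; congr pair; ring.
- rewrite (sum_weights_refl2 l1 l2) (sum_weights_refl1 l1 l2); apply: eq_bigr => p _.
  rewrite mult_dual // -[RHS]mult_refl1 // -[RHS]mult_refl2 //; congr mult.
  by rewrite /psub /refl1 /refl2 /=; congr pair; ring.
- rewrite (sum_weights_refl1 l1 l2) (sum_weights_refl2 l1 l2) (sum_weights_refl1 l1 l2).
  apply: eq_bigr => p _.
  rewrite mult_dual // -[RHS]mult_refl1 // -[RHS]mult_refl2 // -[RHS]mult_refl1 //.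
  by congr mult; rewrite /psub /refl1 /refl2 /=; congr pair; ring.
Qed.

(* The Racah-Speiser formula: c as an alternating sum of six weight
   multiplicities of V_l; w stands for omega. *)
Definition racah_speiser (l1 l2 m1 m2 n1 n2 w : int) : int :=
  let i := l1 + n1 - m2 - w in let j := l2 + n2 - m1 + w in
  multij l1 l2 i j - multij l1 l2 (i + m2 + 1) j - multij l1 l2 i (j + m1 + 1)
  + multij l1 l2 (i + m1 + m2 + 2) (j + m1 + 1) + multij l1 l2 (i + m2 + 1) (j + m1 + m2 + 2)
  - multij l1 l2 (i + m1 + m2 + 2) (j + m1 + m2 + 2).

Lemma inv_dim_racah_speiser (l1 l2 m1 m2 n1 n2 : nat) (w : int) :
  3 * w = l1%:Z + m1%:Z + n1%:Z - l2%:Z - m2%:Z - n2%:Z ->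
  inv_dim l1 l2 m1 m2 n1 n2 = racah_speiser l1 l2 m1 m2 n1 n2 w.
Proof.
move=> def_w; rewrite /inv_dim.
under eq_bigr => p _ do
  under eq_bigr => q _ do rewrite sum_weyl_sign_weights alt_mult_delta //.
rewrite sum_alt_delta_dual.
under eq_bigr => p _ do rewrite alt_mult_delta // /alt_delta !psub_eq_psub.
rewrite big_alt6 !sum_indicator_weights /racah_speiser.
by apply: congr_alt6; apply: mult_psub_latticeE => /=; lia.
Qed.

(** * c on and off the cone C_TM *)

Lemma multij_eq0 (a b i j : int) :
  Order.min (Order.min a i) (Order.min j (a + j - i)) < Order.max 0 (j - b) -> multij a b i j = 0.
Proof. by rewrite /multij; lia. Qed.

Lemma racah_speiser_eq0 (l1 l2 m1 m2 n1 n2 w : int) :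
  0 <= l1 -> 0 <= l2 -> 0 <= m1 -> 0 <= m2 -> 0 <= n1 -> 0 <= n2 ->
  3 * w = l1 + m1 + n1 - l2 - m2 - n2 ->
  l1 - w < 0 \/ l1 - m2 - w + n1 < 0 \/ l1 - m2 + n1 - 2 * w < 0 \/
  l2 - n1 + w + m2 < 0 \/ l2 + w < 0 \/ l2 - n1 + m2 + 2 * w < 0 ->
  racah_speiser l1 l2 m1 m2 n1 n2 w = 0.
Proof.
move=> *; rewrite /racah_speiser.
by rewrite !multij_eq0 //; lia.
Qed.

(* Integer versions of omega, f_i, g_j; the division defining omegaz is exact on Lambda. *)
Definition omegaz (t : pt6) : int := ((l1 t + m1 t + n1 t - (l2 t + m2 t + n2 t)) %/ 3)%Z.

Lemma omegazP {t} : inLambda t -> 3 * omegaz t = l1 t + m1 t + n1 t - l2 t - m2 t - n2 t.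
Proof. by rewrite /inLambda /omegaz; lia. Qed.

Definition fz (i : 'I_3) (t : pt6) : int :=
  match val i with
  | 0%N => 0
  | 1%N => l1 t - m2 t - omegaz t
  | _ => l2 t - n1 t + omegaz t
  end.

Definition gz (j : 'I_6) (t : pt6) : int :=
  match val j with
  | 0%N => - m2 t
  | 1%N => - n1 t
  | 2%N => l1 t - m2 t - n2 t - omegaz t
  | 3%N => - m2 t - omegaz t
  | 4%N => - n1 t + omegaz t
  | _ => l2 t - m1 t - n1 t + omegaz t
  end.

Definition conez (t : pt6) : Prop := forall i j, gz j t <= fz i t.

Definition optz (p : 'I_3) (q : 'I_6) (t : pt6) : Prop :=
  (forall p', fz p t <= fz p' t) /\ (forall q', gz q' t <= gz q t).

Lemma all_ord3 {P : 'I_3 -> Prop} : (forall i, P i) ->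
  [/\ P (Ordinal (isT : (0 < 3)%N)), P (Ordinal (isT : (1 < 3)%N)) & P (Ordinal (isT : (2 < 3)%N))].
Proof. by move=> allP; split. Qed.

Lemma all_ord6 {P : 'I_6 -> Prop} : (forall j, P j) ->
  [/\ P (Ordinal (isT : (0 < 6)%N)), P (Ordinal (isT : (1 < 6)%N)),
      P (Ordinal (isT : (2 < 6)%N)), P (Ordinal (isT : (3 < 6)%N))
    & P (Ordinal (isT : (4 < 6)%N)) /\ P (Ordinal (isT : (5 < 6)%N))].
Proof. by move=> allP; split. Qed.

Lemma conez_nonneg {t} : conez t -> nonneg6 t.
Proof.
move=> /all_ord3[/all_ord6[g0 g1 _ _ [_ _]] /all_ord6[_ _ g2 g3 [_ _]]
                 /all_ord6[_ _ _ _ [g4 g5]]].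
by move: g0 g1 g2 g3 g4 g5; rewrite /fz /gz /nonneg6 /=; lia.
Qed.

Section RacahSpeiserOnCone.
Variable t : pt6.
Hypotheses (t_lambda : inLambda t) (t_cone : conez t).

Let w := omegaz t.
Let i := l1 t + n1 t - m2 t - w.
Let j := l2 t + n2 t - m1 t + w.

(* On the cone three of the six multiplicities vanish. *)
Lemma racah_speiser_cone : racah_speiser (l1 t) (l2 t) (m1 t) (m2 t) (n1 t) (n2 t) w =
  1 + Order.min (Order.min (l1 t) i) (Order.min j (l1 t + j - i)) - Order.max 0 (j - l2 t)
  - Order.max 0 (l1 t + j - i - m2 t - Order.max 0 (j - l2 t))
  - Order.max 0 (Order.min (l1 t) i - j - m1 t + l2 t).
Proof.
have := omegazP t_lambda.
move: t_cone => /all_ord3[/all_ord6 + /all_ord6 + /all_ord6].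
rewrite /fz /gz /= => -[? ? ? ? [? ?]] [? ? ? ? [? ?]] [? ? ? ? [? ?]] ?.
rewrite /racah_speiser -/w -/i -/j.
rewrite (@multij_eq0 _ _ (i + m1 t + m2 t + 2) (j + m1 t + 1)); last by rewrite /i /j /w; lia.
rewrite (@multij_eq0 _ _ (i + m2 t + 1) (j + m1 t + m2 t + 2)); last by rewrite /i /j /w; lia.
rewrite (@multij_eq0 _ _ (i + m1 t + m2 t + 2) (j + m1 t + m2 t + 2));
  last by rewrite /i /j /w; lia.
have -> : multij (l1 t) (l2 t) i j =
    1 + Order.min (Order.min (l1 t) i) (Order.min j (l1 t + j - i)) - Order.max 0 (j - l2 t).
  by rewrite /multij /i /j /w; lia.
have -> : multij (l1 t) (l2 t) (i + m2 t + 1) j =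
    Order.max 0 (l1 t + j - i - m2 t - Order.max 0 (j - l2 t)).
  by rewrite /multij /i /j /w; lia.
have -> : multij (l1 t) (l2 t) i (j + m1 t + 1) =
    Order.max 0 (Order.min (l1 t) i - j - m1 t + l2 t).
  by rewrite /multij /i /j /w; lia.
by ring.
Qed.

Lemma racah_speiser_opt p q : optz p q t ->
  racah_speiser (l1 t) (l2 t) (m1 t) (m2 t) (n1 t) (n2 t) w = 1 + fz p t - gz q t.
Proof.
move=> [p_min q_max]; rewrite racah_speiser_cone.
have := omegazP t_lambda.
move: t_cone (all_ord3 p_min) (all_ord6 q_max) => /all_ord3[/all_ord6 + /all_ord6 + /all_ord6].
case: p {p_min} => [[|[|[|//]]] ?]; case: q {q_max} => [[|[|[|[|[|[|//]]]]]] ?];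
  rewrite /fz /gz /i /j /w /=;
  by move=> -[? ? ? ? [? ?]] [? ? ? ? [? ?]] [? ? ? ? [? ?]] [? ? ?] [? ? ? ? [? ?]]; lia.
Qed.
End RacahSpeiserOnCone.

Lemma inv_dimC a1 a2 b1 b2 c1 c2 : inv_dim a1 a2 b1 b2 c1 c2 = inv_dim b1 b2 a1 a2 c1 c2.
Proof.
rewrite /inv_dim exchange_big /=.
apply: eq_bigr => q _; apply: eq_bigr => p _; apply: eq_bigr => r _.
by rewrite /addw /= [p.1 + _]addrC [p.2 + _]addrC.
Qed.

Lemma inv_dim_rot a1 a2 b1 b2 c1 c2 : inv_dim a1 a2 b1 b2 c1 c2 = inv_dim c1 c2 a1 a2 b1 b2.
Proof.
rewrite /inv_dim; under eq_bigr => p _ do rewrite exchange_big /=.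
rewrite exchange_big /=.
apply: eq_bigr => r _; apply: eq_bigr => p _; apply: eq_bigr => q _.
by rewrite /addw /=; congr weyl_sign; congr pair; ring.
Qed.

(* Any of V_l, V_m, V_n may be the factor whose multiplicities remain. *)
Lemma c_racah_speiser {t} : inLambda t -> nonneg6 t ->
  [/\ c t = racah_speiser (l1 t) (l2 t) (m1 t) (m2 t) (n1 t) (n2 t) (omegaz t),
      c t = racah_speiser (m1 t) (m2 t) (l1 t) (l2 t) (n1 t) (n2 t) (omegaz t) &
      c t = racah_speiser (n1 t) (n2 t) (l1 t) (l2 t) (m1 t) (m2 t) (omegaz t)].
Proof.
move=> t_lambda t_ge0; have := omegazP t_lambda.
have /and5P[? ? ? ? /andP[? ?]] := t_ge0.
rewrite /c t_ge0 => def_w; split; [| rewrite inv_dimC | rewrite inv_dim_rot];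
  by rewrite (inv_dim_racah_speiser _ _ _ _ _ _ (omegaz t)) !gez0_abs //; lia.
Qed.

Lemma c_eq0_outside_cone {t i j} : inLambda t -> fz i t < gz j t -> c t = 0.
Proof.
move=> t_lambda viol; have [t_ge0|t_neg] := boolP (nonneg6 t); last by rewrite /c (negbTE t_neg).
have := omegazP t_lambda; have /and5P[? ? ? ? /andP[? ?]] := t_ge0.
have [c_l c_m c_n] := c_racah_speiser t_lambda t_ge0.
move: viol; case: i => [[|[|[|//]]] ?]; case: j => [[|[|[|[|[|[|//]]]]]] ?];
  rewrite /fz /gz /= => viol def_w;
  first [ lia
        | (rewrite c_l; apply: racah_speiser_eq0; lia)
        | (rewrite c_m; apply: racah_speiser_eq0; lia)
        | (rewrite c_n; apply: racah_speiser_eq0; lia) ].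
Qed.

Lemma exists_optz t : exists p q, optz p q t.
Proof.
exists [arg min_(p < ord0) fz p t]%O, [arg max_(q > ord0) gz q t]%O.
split; first by case: arg_minP => // p _ p_min ?; apply: p_min.
by case: arg_maxP => // q _ q_max ?; apply: q_max.
Qed.

Lemma c_optz {t p q} : inLambda t -> conez t -> optz p q t -> c t = 1 + fz p t - gz q t.
Proof.
move=> t_lambda t_cone opt_pq.
have [-> _ _] := c_racah_speiser t_lambda (conez_nonneg t_cone).
exact: racah_speiser_opt.
Qed.

Lemma conez_c_neq0 {t} : inLambda t -> c t != 0 -> conez t.
Proof.
move=> t_lambda c_neq0 i j; rewrite leNgt; apply/negP => viol.
by rewrite (c_eq0_outside_cone t_lambda viol) in c_neq0.
Qed.

(** * Moving along t + k u *)

Section Shift.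
Variables (t u : pt6) (k : nat).
Hypotheses (t_lambda : inLambda t) (u_lambda : inLambda u).

Local Notation T := (addpt t (scalept k u)).

Lemma shift_sum3 : l1 T + m1 T + n1 T - (l2 T + m2 T + n2 T) = 3 * (omegaz t + omegaz u *+ k).
Proof.
have := omegazP t_lambda; have /(congr1 (fun x => x *+ k)) := omegazP u_lambda.
by rewrite /=; lia.
Qed.

Lemma inLambda_shift : inLambda T.
Proof. by rewrite /inLambda shift_sum3; apply/dvdzP; exists (omegaz t + omegaz u *+ k); ring. Qed.

Lemma omegaz_shift : omegaz T = omegaz t + omegaz u *+ k.
Proof. by rewrite {1}/omegaz shift_sum3 mulKz. Qed.

Lemma fz_shift p : fz p T = fz p t + fz p u *+ k.
Proof. by rewrite /fz omegaz_shift; case: p => [[|[|[|//]]] ?] /=; lia. Qed.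

Lemma gz_shift q : gz q T = gz q t + gz q u *+ k.
Proof. by rewrite /gz omegaz_shift; case: q => [[|[|[|[|[|[|//]]]]]] ?] /=; lia. Qed.

Lemma conez_shift : conez t -> conez u -> conez T.
Proof.
move=> t_cone u_cone i j; rewrite fz_shift gz_shift.
by apply: lerD; [exact: t_cone | apply: ler_wMn2r; exact: u_cone].
Qed.

End Shift.

Definition norm1 (t : pt6) : nat :=
  (`|l1 t| + `|l2 t| + `|m1 t| + `|m2 t| + `|n1 t| + `|n2 t| + `|omegaz t|)%N.

Lemma fz_norm1 p t : (`|fz p t| <= norm1 t)%N.
Proof. by rewrite /fz /norm1; case: p => [[|[|[|//]]] ?] /=; lia. Qed.

Lemma gz_norm1 q t : (`|gz q t| <= norm1 t)%N.
Proof. by rewrite /gz /norm1; case: q => [[|[|[|[|[|[|//]]]]]] ?] /=; lia. Qed.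

Lemma argmin_shift_stable (I : Type) (x y : I -> int) (S k : nat) p :
  (forall i, `|x i| <= S)%N -> (2 * S < k)%N ->
  (forall i, x p + y p *+ k <= x i + y i *+ k) -> forall i, y p <= y i.
Proof.
move=> x_le_S k_gt p_min i; rewrite leNgt; apply/negP => y_lt.
have : (y i + 1) *+ k <= y p *+ k by apply: ler_wMn2r; lia.
by rewrite mulrnDl; have := p_min i; have := x_le_S i; have := x_le_S p; lia.
Qed.

Lemma optz_shift {t u k p q} : inLambda t -> inLambda u -> (2 * norm1 t < k)%N ->
  optz p q (addpt t (scalept k u)) -> optz p q u.
Proof.
move=> t_lambda u_lambda k_gt [p_min q_max]; split.
  apply: (@argmin_shift_stable _ (fz^~ t) _ (norm1 t) k) => // [i|i].
    exact: fz_norm1.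
  by rewrite -!fz_shift //; exact: p_min.
move=> q'; rewrite -lerN2.
apply: (@argmin_shift_stable _ (fun j => - gz j t) (fun j => - gz j u) (norm1 t) k) => // j.
  by rewrite abszN; exact: gz_norm1.
by rewrite !mulNrn -!opprD lerN2 -!gz_shift //; exact: q_max.
Qed.

Lemma c_shift {t u k} : inLambda t -> inLambda u -> conez t -> c u = 1 -> (2 * norm1 t < k)%N ->
  (exists p q, optz p q u /\ c (addpt t (scalept k u)) = 1 + (fz p t - gz q t)) /\
  (forall p q, optz p q u -> c (addpt t (scalept k u)) <= 1 + (fz p t - gz q t)).
Proof.
move=> t_lambda u_lambda t_cone c_u k_gt.
have u_cone : conez u by apply: conez_c_neq0; rewrite ?c_u.
have tight p q : optz p q u -> fz p u = gz q u.
  by move=> /(c_optz u_lambda u_cone); rewrite c_u; lia.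
have T_lambda := inLambda_shift t u k t_lambda u_lambda.
have T_cone := conez_shift t u k t_lambda u_lambda t_cone u_cone.
have [ps [qs opt_T]] := exists_optz (addpt t (scalept k u)).
have opt_u := optz_shift t_lambda u_lambda k_gt opt_T.
rewrite (c_optz T_lambda T_cone opt_T) !fz_shift // !gz_shift // (tight _ _ opt_u).
split; first by exists ps, qs; split; last ring.
move=> p q [p_u q_u]; have [ps_min qs_max] := opt_T; have [ps_u qs_u] := opt_u.
have f_pu : fz p u = fz ps u by apply/eqP; rewrite eq_le ps_u p_u.
have g_qu : gz q u = gz qs u by apply/eqP; rewrite eq_le qs_u q_u.
have := ps_min p; have := qs_max q.
by rewrite !fz_shift // !gz_shift // f_pu g_qu (tight _ _ opt_u); lia.
Qed.

Lemma omegaE t : inLambda t -> omega t = (omegaz t)%:~R.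
Proof.
move=> t_lambda; rewrite /omega.
have -> : l1 t + m1 t + n1 t - l2 t - m2 t - n2 t = omegaz t * 3 by have := omegazP t_lambda; lia.
by rewrite intrM mulfK.
Qed.

Lemma fQE t i : inLambda t -> fQ i t = (fz i t)%:~R.
Proof.
move=> t_lambda; rewrite /fQ /fz omegaE //.
by case: i => [[|[|[|//]]] ?] /=; rewrite ?intrD ?intrN.
Qed.

Lemma gQE t j : inLambda t -> gQ j t = (gz j t)%:~R.
Proof.
move=> t_lambda; rewrite /gQ /gz omegaE //.
by case: j => [[|[|[|[|[|[|//]]]]]] ?] /=; rewrite ?intrD ?intrN.
Qed.

Lemma inCTME {t} : inLambda t -> inCTM t <-> conez t.
Proof.
move=> t_lambda; rewrite /inCTM /conez.
by split=> t_cone i j; move: (t_cone i j); rewrite fQE // gQE // ler_int.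
Qed.

Lemma inCijE {t i j} : inLambda t -> inCij i j t <-> conez t /\ optz i j t.
Proof.
move=> t_lambda; rewrite /inCij /optz -inCTME //.
split=> [[t_cone i_min j_max]|[t_cone [i_min j_max]]].
  by split=> //; split=> [p|q]; [move: (i_min p) | move: (j_max q)]; rewrite !(fQE, gQE) // ler_int.
by split=> // [p|q]; [move: (i_min p) | move: (j_max q)]; rewrite !(fQE, gQE) // ler_int.
Qed.

Lemma fgQE t i j : inLambda t -> 1 + (fQ i t - gQ j t) = (1 + (fz i t - gz j t))%:~R :> rat.
Proof. by move=> t_lambda; rewrite fQE // gQE // intrD intrB. Qed.

Theorem mainTheorem6 (u : pt6) :
  inLambda u -> c u = 1 ->
  forall t : pt6, inLambda t -> inCTM t ->
  exists k0 : nat, (0 < k0)%N /\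
    forall k : nat, (k0 <= k)%N ->
      (* c(t+ku) = 1 + min { f_i(t) - g_j(t) : u in C(i,j) } *)
      (exists (i : 'I_3) (j : 'I_6), inCij i j u /\
          (c (addpt t (scalept k u)))%:~R = 1 + (fQ i t - gQ j t) :> rat) /\
      (forall (i : 'I_3) (j : 'I_6), inCij i j u ->
          (c (addpt t (scalept k u)))%:~R <= 1 + (fQ i t - gQ j t) :> rat).
Proof.
move=> u_lambda c_u t t_lambda /(inCTME t_lambda) t_cone.
have u_cone : conez u by apply: conez_c_neq0; rewrite ?c_u.
exists (2 * norm1 t).+1; split=> // k k_gt.
have [[p [q [opt_pq c_eq]]] c_le] := c_shift t_lambda u_lambda t_cone c_u k_gt.
split.
  by exists p, q; split; [apply/(inCijE u_lambda) | rewrite c_eq fgQE].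
by move=> i j /(inCijE u_lambda)[_ opt_ij]; rewrite fgQE // ler_int c_le.
Qed.
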